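(* Consider the stationary M/M/1/K queue (queue length at time $0$ distributed according to the stationary distribution) with arrival rate $\lambda>0$, service rate $\mu>0$, $\rho=\lambda/\mu$ and capacity $K\ge1$, and let $D(t)$ be the number of departures in $[0,t]$. Then $\mathrm{Var}(D(t))=\bar v\,t+\bar b_e+o(1)$ as $t\to\infty$, where $$\bar v=\begin{cases}\lambda\,\dfrac{(1+\rho^{K+1})\big(1-(1+2K)\rho^K(1-\rho)-\rho^{2K+1}\big)}{(1-\rho^{K+1})^3}, & \rho\ne1,\\[1em] \lambda\Big(\dfrac23-\dfrac{3K+2}{3(K+1)^2}\Big), & \rho=1,\end{cases}$$ and $$\bar b_e=\begin{cases}\rho^{K+1}\dfrac{N_K(\rho)}{(1-\rho)^2(1-\rho^{K+1})^4}, & \rho\ne1,\\[1em] \dfrac{7K^4+28K^3+37K^2+18K}{180(K+1)^2}, & \rho=1,\end{cases}$$ with $$N_K(\rho)=\big[6(1+\rho^2)(1+K)^2-4\rho(1+6K+3K^2)\big]\rho^{K+1}+\rho^2(2+3K+K^2)(1+\rho^{2K})-2\rho(3+2K+K^2)(1+\rho^{2(K+1)})+K(1+K)(1+\rho^{2(K+2)}).$$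
   Context: The M/M/1/K queue: a single server, Poisson arrivals at rate $\lambda$, exponential service times with rate $\mu$, and at most $K$ customers in the system (arrivals finding $K$ customers are lost). The queue length $Q(t)$ is the birth–death chain on $\{0,\dots,K\}$ with up-rate $\lambda$ and down-rate $\mu$; its stationary distribution is $\pi_i=\frac{1-\rho}{1-\rho^{K+1}}\rho^i$ for $\rho\ne1$ and $\pi_i=\frac1{K+1}$ for $\rho=1$. $D(t)$ counts the service completions (downward jumps of $Q$) in $[0,t]$. *)

From Stdlib Require Import Reals Lra Lia ClassicalEpsilon Factorial.
Open Scope R_scope.

(* Value of an infinite real series (chosen limit of the partial sums;
   meaningful when the series converges, which is the case below). *)
Definition series (a : nat -> R) : R :=
  epsilon (inhabits 0) (fun l => Un_cv (fun N => sum_f_R0 a N) l).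

Definition pi_stat (lam mu : R) (K i : nat) : R :=
  let rho := lam / mu in
  if Nat.leb i K then
    (if Req_dec_T rho 1 then / INR (K + 1)
     else (1 - rho) / (1 - rho ^ (K + 1)) * rho ^ i)
  else 0.

(* Construction of the process by uniformization at rate lam+mu:
   ulaw lam mu K m j n = P(after m Poisson(lam+mu) clock events, Q = j and
   the number of departures so far is n), started from Q(0) ~ pi_stat.
   At each event: with prob lam/(lam+mu) an arrival (lost if Q = K);
   with prob mu/(lam+mu) a potential service (a departure iff Q > 0). *)
Fixpoint ulaw (lam mu : R) (K : nat) (m : nat) (j n : nat) {struct m} : R :=
  match m with
  | O => if Nat.eqb n 0 then pi_stat lam mu K j else 0
  | S m' =>
    if Nat.leb j K then
      lam / (lam + mu) *
        ((match j with O => 0 | S j' => ulaw lam mu K m' j' n end)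
         + (if Nat.eqb j K then ulaw lam mu K m' K n else 0))
      + mu / (lam + mu) *
        ((match n with
          | O => 0
          | S n' => if Nat.leb (S j) K then ulaw lam mu K m' (S j) n' else 0
          end)
         + (if Nat.eqb j 0 then ulaw lam mu K m' 0 n else 0))
    else 0
  end.

Definition umoment (lam mu : R) (K m k : nat) : R :=
  sum_f_R0 (fun j => sum_f_R0 (fun n => INR n ^ k * ulaw lam mu K m j n) m) K.

Definition poisson_w (lam mu t : R) (m : nat) : R :=
  exp (- ((lam + mu) * t)) * ((lam + mu) * t) ^ m / INR (fact m).

Definition ED_moment (lam mu : R) (K : nat) (t : R) (k : nat) : R :=
  series (fun m => poisson_w lam mu t m * umoment lam mu K m k).

Definition VarD (lam mu : R) (K : nat) (t : R) : R :=
  ED_moment lam mu K t 2 - (ED_moment lam mu K t 1) ^ 2.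

Definition vbar (lam mu : R) (K : nat) : R :=
  let rho := lam / mu in
  let k := INR K in
  if Req_dec_T rho 1 then
    lam * (2 / 3 - (3 * k + 2) / (3 * (k + 1) ^ 2))
  else
    lam * ((1 + rho ^ (K + 1)) *
           (1 - (1 + 2 * k) * rho ^ K * (1 - rho) - rho ^ (2 * K + 1)))
        / (1 - rho ^ (K + 1)) ^ 3.

Definition N_K (K : nat) (rho : R) : R :=
  let k := INR K in
  (6 * (1 + rho ^ 2) * (1 + k) ^ 2 - 4 * rho * (1 + 6 * k + 3 * k ^ 2)) * rho ^ (K + 1)
  + rho ^ 2 * (2 + 3 * k + k ^ 2) * (1 + rho ^ (2 * K))
  - 2 * rho * (3 + 2 * k + k ^ 2) * (1 + rho ^ (2 * (K + 1)))
  + k * (1 + k) * (1 + rho ^ (2 * (K + 2))).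

Definition bbar_e (lam mu : R) (K : nat) : R :=
  let rho := lam / mu in
  let k := INR K in
  if Req_dec_T rho 1 then
    (7 * k ^ 4 + 28 * k ^ 3 + 37 * k ^ 2 + 18 * k) / (180 * (k + 1) ^ 2)
  else
    rho ^ (K + 1) * N_K K rho / ((1 - rho) ^ 2 * (1 - rho ^ (K + 1)) ^ 4).

(* The queue is realised by uniformization: [ulaw m] is the joint law of the
   queue length and of the number of departures after [m] events of a
   Poisson(lam + mu) clock, so E[D(t)^k] is the Poisson(x) mixture, with
   x = (lam + mu) t, of the moments [umoment m k] after [m] events.

   1. The embedded chain: its one-step evolution [step] of signed measures on
      {0..K} is the adjoint of a Markov operator [backstep]; within K steps
      state 0 is reached with probability >= q^K (Doeblin), so measures of
      total mass zero are driven to 0 and stay bounded.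
   2. Moments after m events: given solutions [psi], [chi] of the Poisson
      equations (I - step) psi = flux - c pi and (I - step) chi = psi, the
      first two departure moments are c m and
      c^2 m(m-1) + (c - 2q psi_0) m + 2q chi_0 - 2q (step^m chi)_0.
   3. The marginals of [ulaw] follow [step] with a departure source term, and
      [pi_stat] is stationary, so 2 applies to the queue.
   4. Poisson mixing turns a quadratic in m into the same quadratic in x,
      and a bounded null sequence into o(1) as x -> oo.
   5. Explicit solutions [psi], [chi] (polynomials times rho^j when rho <> 1,
      polynomials when rho = 1) are checked by field computations; their
      values at 0 give vbar and bbar_e.
   The theorem combines 2-5: the x^2 terms cancel in the variance. *)

From Stdlib Require Import Reals Lra Lia FunctionalExtensionality ClassicalEpsilon Factorial.
Open Scope R_scope.

(** * Finite sums *)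

Lemma sum_S (g : nat -> R) n : sum_f_R0 g (S n) = sum_f_R0 g n + g (S n).
Proof. reflexivity. Qed.

Lemma sum_shift (g : nat -> R) n :
  sum_f_R0 g (S n) = g 0%nat + sum_f_R0 (fun i => g (S i)) n.
Proof. rewrite decomp_sum; [reflexivity | lia]. Qed.

Lemma sum_scal (g : nat -> R) n x :
  sum_f_R0 (fun i => x * g i) n = x * sum_f_R0 g n.
Proof. rewrite scal_sum. apply sum_eq. intros; ring. Qed.

Lemma sum_zero (g : nat -> R) n :
  (forall i, (i <= n)%nat -> g i = 0) -> sum_f_R0 g n = 0.
Proof. intro H. rewrite (sum_eq g (fun _ => 0)) by auto. rewrite sum_cte. ring. Qed.

Lemma sum_last0 (g : nat -> R) n : g (S n) = 0 -> sum_f_R0 g (S n) = sum_f_R0 g n.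
Proof. intro H. rewrite sum_S, H. ring. Qed.

Lemma sum_point (g : nat -> R) n i : (i <= n)%nat ->
  sum_f_R0 (fun j => g j * (if Nat.eqb j i then 1 else 0)) n = g i.
Proof.
  induction n as [|n IH]; intro Hi.
  - replace i with 0%nat by lia. simpl. ring.
  - rewrite sum_S. destruct (Nat.eqb_spec (S n) i) as [<-|Hne].
    + rewrite sum_zero; [ring|]. intros j Hj.
      destruct (Nat.eqb_spec j (S n)); [lia | ring].
    + rewrite IH by lia. ring.
Qed.

Lemma pairing_bound (v f : nat -> R) n M :
  (forall j, (j <= n)%nat -> Rabs (f j) <= M) ->
  Rabs (sum_f_R0 (fun j => v j * f j) n) <= M * sum_f_R0 (fun j => Rabs (v j)) n.
Proof.
  intro Hf. eapply Rle_trans; [apply sum_f_R0_triangle|].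
  rewrite <- sum_scal. apply sum_Rle. intros j Hj.
  rewrite Rabs_mult, Rmult_comm. apply Rmult_le_compat_r; [apply Rabs_pos | auto].
Qed.

Lemma zero_mass_pairing_bound (v f : nat -> R) n lo hi :
  sum_f_R0 v n = 0 -> (forall j, (j <= n)%nat -> lo <= f j <= hi) ->
  Rabs (sum_f_R0 (fun j => v j * f j) n) <= (hi - lo) * sum_f_R0 (fun j => Rabs (v j)) n.
Proof.
  intros Hv Hf.
  replace (sum_f_R0 (fun j => v j * f j) n)
    with (sum_f_R0 (fun j => v j * (f j - lo)) n).
  - apply pairing_bound. intros j Hj. destruct (Hf j Hj).
    rewrite Rabs_right; lra.
  - rewrite (sum_eq _ (fun j => v j * f j - lo * v j)) by (intros; ring).
    rewrite minus_sum, sum_scal, Hv. ring.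
Qed.

(** * The uniformized chain on {0..K} *)

Section Chain.
Variables (p q : R) (K : nat).

(* This is the recursion defining [ulaw]
   with the departure counter summed out. *)
Definition step (v : nat -> R) (j : nat) : R :=
  if Nat.leb j K then
    p * ((match j with O => 0 | S j' => v j' end) + (if Nat.eqb j K then v K else 0))
    + q * ((if Nat.leb (S j) K then v (S j) else 0) + (if Nat.eqb j 0 then v 0%nat else 0))
  else 0.

(* The same transition acting on functions (the transition matrix itself). *)
Definition backstep (f : nat -> R) (j : nat) : R :=
  p * f (if Nat.leb (S j) K then S j else K) + q * f (Nat.pred j).

Definition steps (m : nat) (v : nat -> R) := Nat.iter m step v.
Definition backsteps (m : nat) (f : nat -> R) := Nat.iter m backstep f.

Lemma step_above v j : (K < j)%nat -> step v j = 0.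
Proof. intro H. unfold step. rewrite (proj2 (Nat.leb_gt j K)) by lia. reflexivity. Qed.

Lemma step_linear (a b : R) (u w : nat -> R) j :
  step (fun i => a * u i + b * w i) j = a * step u j + b * step w j.
Proof.
  unfold step. destruct (Nat.leb j K); [|ring].
  destruct j; destruct (Nat.eqb _ K); destruct (Nat.leb _ K); simpl; ring.
Qed.

Lemma steps_linear m (a b : R) (u w : nat -> R) :
  steps m (fun i => a * u i + b * w i) = (fun j => a * steps m u j + b * steps m w j).
Proof.
  induction m as [|m IH]; [reflexivity|].
  change (steps (S m) ?x) with (step (steps m x)). rewrite IH.
  apply functional_extensionality. intro j. apply step_linear.
Qed.

Hypothesis HK : (1 <= K)%nat.

Lemma step_at0 v : step v 0%nat = q * (v 1%nat + v 0%nat).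
Proof.
  unfold step. rewrite (proj2 (Nat.leb_le 0 K)), (proj2 (Nat.leb_le 1 K)) by lia.
  destruct (Nat.eqb_spec 0 K); [lia|]. simpl. ring.
Qed.

Lemma step_interior v j : (S j < K)%nat -> step v (S j) = p * v j + q * v (S (S j)).
Proof.
  intro H. unfold step. rewrite (proj2 (Nat.leb_le (S j) K)), (proj2 (Nat.leb_le (S (S j)) K)) by lia.
  destruct (Nat.eqb_spec (S j) K); [lia|]. simpl. ring.
Qed.

Lemma step_duality (v f : nat -> R) :
  sum_f_R0 (fun j => step v j * f j) K = sum_f_R0 (fun j => v j * backstep f j) K.
Proof.
  unfold step, backstep. destruct K as [|K']; [lia|]. clear HK.
  rewrite (sum_eq _ (fun j =>
       p * (match j with O => 0 | S j' => v j' * f j end)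
     + p * (if Nat.eqb j (S K') then v (S K') * f (S K') else 0)
     + q * (if Nat.leb (S j) (S K') then v (S j) * f j else 0)
     + q * (if Nat.eqb j 0 then v 0%nat * f 0%nat else 0))).
  2:{ intros j Hj. rewrite (proj2 (Nat.leb_le j (S K'))) by lia.
      destruct (Nat.eqb_spec j (S K')) as [->|Hne].
      - rewrite (proj2 (Nat.leb_gt (S (S K')) (S K'))) by lia. simpl. ring.
      - destruct j; destruct (Nat.leb _ _); simpl; ring. }
  rewrite (sum_eq (fun j => v j * _)
     (fun j => p * (v j * f (if Nat.leb (S j) (S K') then S j else S K'))
             + q * (v j * f (Nat.pred j)))) by (intros; ring).
  rewrite !plus_sum, !sum_scal.
  rewrite (sum_shift (fun j => match j with 0%nat => 0 | S j' => v j' * f j end)).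
  rewrite (sum_shift (fun j => v j * f (Nat.pred j))).
  rewrite (sum_shift (fun j => if Nat.eqb j 0 then _ else 0)).
  rewrite (sum_zero (fun i => if Nat.eqb (S i) 0 then _ else 0)) by reflexivity.
  rewrite (sum_last0 (fun j => if Nat.leb (S j) (S K') then _ else 0))
    by (rewrite (proj2 (Nat.leb_gt _ _)) by lia; reflexivity).
  rewrite (sum_eq (fun j => if Nat.leb (S j) (S K') then v (S j) * f j else 0)
                  (fun j => v (S j) * f j))
    by (intros i Hi; rewrite (proj2 (Nat.leb_le (S i) (S K'))) by lia; reflexivity).
  rewrite sum_S, (sum_zero (fun j => if Nat.eqb j (S K') then _ else 0))
    by (intros j Hj; destruct (Nat.eqb_spec j (S K')); [lia | reflexivity]).
  rewrite (sum_S (fun j => v j * f (if Nat.leb (S j) (S K') then S j else S K'))).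
  rewrite (sum_eq (fun j => v j * f (if Nat.leb (S j) (S K') then S j else S K'))
                  (fun j => v j * f (S j)))
    by (intros i Hi; rewrite (proj2 (Nat.leb_le (S i) (S K'))) by lia; reflexivity).
  rewrite (proj2 (Nat.leb_gt (S (S K')) (S K'))) by lia. rewrite Nat.eqb_refl. simpl. ring.
Qed.

Lemma steps_duality m (v f : nat -> R) :
  sum_f_R0 (fun j => steps m v j * f j) K = sum_f_R0 (fun j => v j * backsteps m f j) K.
Proof.
  revert f. induction m as [|m IH]; intro f; [reflexivity|].
  change (steps (S m) v) with (step (steps m v)).
  rewrite step_duality, IH. unfold backsteps. rewrite Nat.iter_swap. reflexivity.
Qed.

Hypothesis pq1 : p + q = 1.

(* [step] preserves total mass, since [backstep] fixes constants. *)
Lemma step_mass (v : nat -> R) : sum_f_R0 (step v) K = sum_f_R0 v K.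
Proof.
  pose proof (step_duality v (fun _ => 1)) as H.
  rewrite (sum_eq (fun j => step v j * 1) (step v)) in H by (intros; ring).
  rewrite H. apply sum_eq. intros. unfold backstep. rewrite <- Rmult_plus_distr_r, pq1. ring.
Qed.

Lemma steps_mass m (v : nat -> R) : sum_f_R0 (steps m v) K = sum_f_R0 v K.
Proof.
  induction m as [|m IH]; [reflexivity|].
  change (steps (S m) v) with (step (steps m v)). rewrite step_mass. exact IH.
Qed.

End Chain.
(** * Doeblin contraction of [backstep] *)

Section Doeblin.
Variables (p q : R) (K : nat).
Hypothesis Hp : 0 <= p.
Hypothesis Hq : 0 < q.
Hypothesis pq1 : p + q = 1.
Hypothesis HK : (1 <= K)%nat.

Definition bounded_on (f : nat -> R) (lo hi : R) :=
  forall j, (j <= K)%nat -> lo <= f j <= hi.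

Lemma convex_in (x y lo hi : R) : lo <= x <= hi -> lo <= y <= hi ->
  lo <= p * x + q * y <= hi.
Proof. intros [] []. split; nra. Qed.

Lemma backsteps_bounded n f lo hi :
  bounded_on f lo hi -> bounded_on (backsteps p q K n f) lo hi.
Proof.
  intro H. induction n as [|n IH]; [exact H|]. intros j Hj.
  change (backsteps p q K (S n) f j) with (backstep p q K (backsteps p q K n f) j).
  apply convex_in; apply IH; [destruct (Nat.leb_spec (S j) K)|]; lia.
Qed.

(* Within [n <= K] steps, state 0 is reached from any [i <= n] with probability
   at least [q ^ n] (by [n] consecutive down-moves), which pins the value of
   [backsteps n f i] towards [f 0]. *)
Lemma backsteps_pinned n f lo hi : bounded_on f lo hi -> (n <= K)%nat ->
  forall i, (i <= n)%nat ->
  q ^ n * f 0%nat + (1 - q ^ n) * lo <= backsteps p q K n f i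
  <= q ^ n * f 0%nat + (1 - q ^ n) * hi.
Proof.
  intros Hb. induction n as [|n IH]; intros HnK i Hi.
  - replace i with 0%nat by lia. simpl. lra.
  - change (backsteps p q K (S n) f i) with (backstep p q K (backsteps p q K n f) i).
    unfold backstep.
    set (u := if Nat.leb (S i) K then S i else K).
    assert (Hu : lo <= backsteps p q K n f u <= hi).
    { apply backsteps_bounded; auto. unfold u. destruct (Nat.leb_spec (S i) K); lia. }
    destruct Hu, (IH ltac:(lia) (Nat.pred i) ltac:(lia)).
    simpl pow. split; nra.
Qed.

Lemma backsteps_range_shrinks s f lo hi : bounded_on f lo hi ->
  exists lo' hi', bounded_on (backsteps p q K (s * K) f) lo' hi'
                  /\ hi' - lo' = (1 - q ^ K) ^ s * (hi - lo).
Proof.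
  intro Hb. induction s as [|s IH].
  - exists lo, hi. split; [exact Hb | simpl; ring].
  - destruct IH as (lo' & hi' & Hb' & Hw).
    set (c := q ^ K * backsteps p q K (s * K) f 0%nat).
    exists (c + (1 - q ^ K) * lo'), (c + (1 - q ^ K) * hi'). split.
    + replace (S s * K)%nat with (K + s * K)%nat by lia.
      unfold backsteps. rewrite Nat.iter_add. intros j Hj.
      apply backsteps_pinned; auto.
    + transitivity ((1 - q ^ K) * (hi' - lo')); [ring | rewrite Hw; simpl; ring].
Qed.

Lemma contraction_factor : 0 <= 1 - q ^ K < 1.
Proof.
  assert (0 < q ^ K) by (apply pow_lt; lra).
  assert (q ^ K <= 1 ^ K) by (apply pow_incr; lra). rewrite pow1 in *. lra.
Qed.

Definition point (i j : nat) : R := if Nat.eqb j i then 1 else 0.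

Lemma point_bounded i : bounded_on (point i) 0 1.
Proof. intros j _. unfold point. destruct (Nat.eqb j i); lra. Qed.

Lemma steps_at_state m (v : nat -> R) i : (i <= K)%nat ->
  steps p q K m v i = sum_f_R0 (fun j => v j * backsteps p q K m (point i) j) K.
Proof. intro Hi. rewrite <- steps_duality by exact HK. unfold point. rewrite sum_point; auto. Qed.

Lemma steps_bounded (v : nat -> R) m i : (i <= K)%nat ->
  Rabs (steps p q K m v i) <= sum_f_R0 (fun j => Rabs (v j)) K.
Proof.
  intro Hi. rewrite steps_at_state by exact Hi.
  rewrite <- (Rmult_1_l (sum_f_R0 (fun j => Rabs (v j)) K)). apply pairing_bound.
  intros j Hj. destruct (backsteps_bounded m _ _ _ (point_bounded i) j Hj).
  rewrite Rabs_right; lra.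
Qed.

Lemma zero_mass_decays (v : nat -> R) i : (i <= K)%nat -> sum_f_R0 v K = 0 ->
  forall eps, 0 < eps -> exists N, forall m, (N <= m)%nat -> Rabs (steps p q K m v i) <= eps.
Proof.
  intros Hi Hv eps Heps.
  set (A := sum_f_R0 (fun j => Rabs (v j)) K).
  assert (HA : 0 <= A) by (apply cond_pos_sum; intro; apply Rabs_pos).
  pose proof contraction_factor as Hc.
  destruct (pow_lt_1_zero (1 - q ^ K) ltac:(rewrite Rabs_right; lra) (eps / (A + 1)))
    as [s Hs]; [apply Rdiv_lt_0_compat; lra|].
  specialize (Hs s (Nat.le_refl _)). rewrite Rabs_right in Hs by (apply Rle_ge, pow_le; lra).
  destruct (backsteps_range_shrinks s (point i) 0 1 (point_bounded i)) as (lo & hi & Hb & Hw).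
  exists (s * K)%nat. intros m Hm. rewrite steps_at_state by exact Hi.
  eapply Rle_trans.
  { apply (zero_mass_pairing_bound v _ K lo hi Hv).
    replace m with ((m - s * K) + s * K)%nat by lia. unfold backsteps. rewrite Nat.iter_add.
    apply backsteps_bounded, Hb. }
  fold A. rewrite Hw, Rminus_0_r, Rmult_1_r.
  apply Rle_trans with (eps / (A + 1) * A); [apply Rmult_le_compat_r; lra|].
  apply Rmult_le_reg_r with (A + 1); [lra|].
  replace (eps / (A + 1) * A * (A + 1)) with (eps * A) by (field; lra). nra.
Qed.

End Doeblin.
(* To verify [(I - step) v = rhs] it suffices to check the rows [j < K] when
   [rhs] has total mass zero: the row [K] follows from conservation of mass. *)
Lemma balance_from_rows (p q : R) (K : nat) (v rhs : nat -> R) :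
  p + q = 1 -> (1 <= K)%nat ->
  (forall j, (K < j)%nat -> v j = 0) -> (forall j, (K < j)%nat -> rhs j = 0) ->
  v 0%nat - step p q K v 0%nat = rhs 0%nat ->
  (forall j, (S j < K)%nat -> v (S j) - step p q K v (S j) = rhs (S j)) ->
  sum_f_R0 rhs K = 0 ->
  forall j, v j - step p q K v j = rhs j.
Proof.
  intros pq1 HK Hv Hr H0 HI Hs j.
  assert (Hlt : forall j, (j < K)%nat -> v j - step p q K v j = rhs j)
    by (intros [|j'] Hj; [exact H0 | apply HI; exact Hj]).
  destruct (Nat.lt_total j K) as [Hj|[->|Hj]].
  - apply Hlt, Hj.
  - assert (Hsum : sum_f_R0 (fun i => v i - step p q K v i) K = 0)
      by (rewrite minus_sum, step_mass by auto; ring).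
    destruct K as [|K']; [lia|].
    rewrite sum_S in Hsum, Hs.
    rewrite (sum_eq (fun i => v i - step p q (S K') v i) rhs) in Hsum
      by (intros i Hi; apply Hlt; lia).
    lra.
  - rewrite Hv, Hr, step_above by auto. ring.
Qed.

(** * The first two departure moments after [m] events *)

Section Moments.
Variables (p q : R) (K : nat).
Hypothesis pq1 : p + q = 1.
Hypothesis HK : (1 <= K)%nat.

Variable pi : nat -> R.
Hypothesis pi_mass : sum_f_R0 pi K = 1.

(* Departure rate per event: a potential service succeeds iff Q > 0. *)
Definition departure_rate := q * (1 - pi 0%nat).

(* A departure lands the queue in state [j] from state [j+1]. *)
Definition departure_flux (j : nat) := if Nat.leb (S j) K then q * pi (S j) else 0.

Lemma departure_pairing v :
  sum_f_R0 (fun j => if Nat.leb (S j) K then q * v (S j) else 0) K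
  = q * (sum_f_R0 v K - v 0%nat).
Proof.
  destruct K as [|K']; [lia|].
  rewrite sum_last0 by (rewrite (proj2 (Nat.leb_gt _ _)) by lia; reflexivity).
  rewrite (sum_shift v), (sum_eq _ (fun j => q * v (S j)))
    by (intros i Hi; rewrite (proj2 (Nat.leb_le _ _)) by lia; reflexivity).
  rewrite sum_scal. ring.
Qed.

Lemma departure_source_mass :
  sum_f_R0 (fun j => departure_flux j - departure_rate * pi j) K = 0.
Proof.
  rewrite minus_sum, sum_scal, pi_mass. unfold departure_flux.
  rewrite departure_pairing, pi_mass. unfold departure_rate. ring.
Qed.

Hypothesis pi_stationary : forall j, step p q K pi j = pi j.

Variables psi chi : nat -> R.
Hypothesis psi_eq : forall j, psi j - step p q K psi j = departure_flux j - departure_rate * pi j.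
Hypothesis psi_mass : sum_f_R0 psi K = 0.
Hypothesis chi_eq : forall j, chi j - step p q K chi j = psi j.

(* [M1 m j = E[D_m; Q_m = j]] and [M2 m j = E[D_m ^ 2; Q_m = j]]: each event
   moves the queue by [step] and a departure raises [D] by one. *)
Variables M1 M2 : nat -> nat -> R.
Hypothesis M1_0 : forall j, M1 0%nat j = 0.
Hypothesis M1_S : forall m j, M1 (S m) j = step p q K (M1 m) j + departure_flux j.
Hypothesis M2_0 : forall j, M2 0%nat j = 0.
Hypothesis M2_S : forall m j, M2 (S m) j =
  step p q K (M2 m) j + (if Nat.leb (S j) K then q * (2 * M1 m (S j) + pi (S j)) else 0).

Lemma M1_closed_form m j :
  M1 m j = INR m * departure_rate * pi j + psi j - steps p q K m psi j.
Proof.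
  revert j. induction m as [|m IH]; intro j.
  - rewrite M1_0. simpl. ring.
  - assert (E : M1 m = fun i => (INR m * departure_rate) * pi i
                               + 1 * (1 * psi i + (-1) * steps p q K m psi i))
      by (apply functional_extensionality; intro i; rewrite IH; ring).
    rewrite M1_S, E, !step_linear, pi_stationary.
    change (step p q K (steps p q K m psi) j) with (steps p q K (S m) psi j).
    specialize (psi_eq j). rewrite S_INR. lra.
Qed.

Lemma first_moment m : sum_f_R0 (M1 m) K = INR m * departure_rate.
Proof.
  rewrite (sum_eq _ (fun j => (INR m * departure_rate) * pi j + (psi j - steps p q K m psi j)))
    by (intros; rewrite M1_closed_form; ring).
  rewrite plus_sum, minus_sum, sum_scal, steps_mass, pi_mass, psi_mass by auto. ring.
Qed.

(* Since [psi = (I - step) chi], the evolved [psi] telescopes. *)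
Lemma steps_psi m j : steps p q K m psi j = steps p q K m chi j - steps p q K (S m) chi j.
Proof.
  assert (E : psi = fun i => 1 * chi i + (-1) * step p q K chi i)
    by (apply functional_extensionality; intro i; rewrite <- chi_eq; ring).
  rewrite E, steps_linear.
  replace (steps p q K m (step p q K chi)) with (steps p q K (S m) chi)
    by (unfold steps; rewrite Nat.iter_swap; reflexivity). ring.
Qed.

Lemma second_moment m : sum_f_R0 (M2 m) K =
  departure_rate ^ 2 * (INR m * (INR m - 1)) + (departure_rate - 2 * q * psi 0%nat) * INR m
  + 2 * q * chi 0%nat - 2 * q * steps p q K m chi 0%nat.
Proof.
  induction m as [|m IH].
  - rewrite sum_zero by (intros; apply M2_0). simpl. ring.
  - rewrite (sum_eq _ (fun j => step p q K (M2 m) j +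
        (if Nat.leb (S j) K then q * (2 * M1 m (S j) + pi (S j)) else 0))) by (intros; apply M2_S).
    rewrite plus_sum, step_mass, IH by auto.
    rewrite (departure_pairing (fun j => 2 * M1 m j + pi j)).
    rewrite plus_sum, sum_scal, first_moment, pi_mass, M1_closed_form, steps_psi.
    rewrite S_INR. unfold departure_rate. ring.
Qed.

End Moments.
(** * The uniformized M/M/1/K queue *)

Definition arrival_prob (lam mu : R) := lam / (lam + mu).
Definition service_prob (lam mu : R) := mu / (lam + mu).

Lemma pow_ne_1 r n : 0 < r -> r <> 1 -> (1 <= n)%nat -> r ^ n <> 1.
Proof.
  intros Hr Hne Hn. destruct (Rlt_or_le r 1) as [H|H].
  - assert (0 <= r ^ n < 1) by (apply pow_lt_1_compat; [lra | lia]). lra.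
  - assert (1 < r ^ n) by (apply Rlt_pow_R1; [lra | lia]). lra.
Qed.

Section Queue.
Variables (lam mu : R) (K : nat).
Hypothesis Hlam : 0 < lam.
Hypothesis Hmu : 0 < mu.
Hypothesis HK : (1 <= K)%nat.

Notation p := (arrival_prob lam mu).
Notation q := (service_prob lam mu).

Lemma prob_sum : p + q = 1.
Proof. unfold arrival_prob, service_prob. field. lra. Qed.

Lemma ulaw_beyond m j n : (m < n)%nat -> ulaw lam mu K m j n = 0.
Proof.
  revert j n. induction m as [|m IH]; intros j n Hn.
  - simpl. destruct (Nat.eqb_spec n 0); [lia | reflexivity].
  - cbn [ulaw]. destruct (Nat.leb j K); [|reflexivity].
    rewrite (IH K n), (IH 0%nat n) by lia.
    replace (match j with O => 0 | S j' => ulaw lam mu K m j' n end) with 0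
      by (destruct j; [reflexivity | symmetry; apply IH; lia]).
    replace (match n with O => 0 | S n' => if Nat.leb (S j) K then ulaw lam mu K m (S j) n' else 0 end)
      with 0 by (destruct n; [|destruct (Nat.leb _ _); [symmetry; apply IH; lia|]]; reflexivity).
    destruct (Nat.eqb j K), (Nat.eqb j 0); ring.
Qed.

(* [marginal h m j = E[h(D_m); Q_m = j]] after [m] events. *)
Definition marginal (h : nat -> R) (m j : nat) : R :=
  sum_f_R0 (fun n => h n * ulaw lam mu K m j n) m.

Lemma marginal_extend (h : nat -> R) m i :
  sum_f_R0 (fun n => h n * ulaw lam mu K m i n) (S m) = marginal h m i.
Proof. unfold marginal. rewrite sum_last0; [reflexivity|]. rewrite ulaw_beyond by lia. ring. Qed.

Lemma departure_shift (h : nat -> R) m j :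
  sum_f_R0 (fun n => h n * match n with
       | O => 0 | S n' => if Nat.leb (S j) K then ulaw lam mu K m (S j) n' else 0 end) (S m)
  = (if Nat.leb (S j) K then marginal h m (S j)
       + sum_f_R0 (fun n => (h (S n) - h n) * ulaw lam mu K m (S j) n) m else 0).
Proof.
  rewrite sum_shift. destruct (Nat.leb (S j) K).
  - unfold marginal. rewrite <- plus_sum. simpl. rewrite Rmult_0_r, Rplus_0_l.
    apply sum_eq. intros; ring.
  - rewrite sum_zero by (intros; ring). ring.
Qed.

Lemma marginal_S (h : nat -> R) m j :
  marginal h (S m) j = step p q K (marginal h m) j +
    (if Nat.leb (S j) K
     then q * sum_f_R0 (fun n => (h (S n) - h n) * ulaw lam mu K m (S j) n) m else 0).
Proof.
  unfold step. destruct (Nat.leb_spec j K) as [HjK|HjK].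
  2:{ rewrite (proj2 (Nat.leb_gt (S j) K)) by lia. unfold marginal.
      rewrite sum_zero; [ring|]. intros n _. cbn [ulaw].
      rewrite (proj2 (Nat.leb_gt j K)) by lia. ring. }
  unfold marginal at 1.
  rewrite (sum_eq _ (fun n =>
      p * (h n * match j with O => 0 | S j' => ulaw lam mu K m j' n end)
    + p * (if Nat.eqb j K then h n * ulaw lam mu K m K n else 0)
    + q * (h n * match n with O => 0 | S n' => if Nat.leb (S j) K then ulaw lam mu K m (S j) n' else 0 end)
    + q * (if Nat.eqb j 0 then h n * ulaw lam mu K m 0 n else 0))).
  2:{ intros n _. cbn [ulaw]. rewrite (proj2 (Nat.leb_le j K)) by lia.
      fold (arrival_prob lam mu) (service_prob lam mu).
      destruct (Nat.eqb j K), (Nat.eqb j 0); ring. }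
  rewrite !plus_sum, !sum_scal, departure_shift.
  replace (sum_f_R0 (fun n => h n * match j with O => 0 | S j' => ulaw lam mu K m j' n end) (S m))
    with (match j with O => 0 | S j' => marginal h m j' end)
    by (destruct j; [rewrite sum_zero by (intros; ring) | rewrite marginal_extend]; reflexivity).
  replace (sum_f_R0 (fun n => if Nat.eqb j K then h n * ulaw lam mu K m K n else 0) (S m))
    with (if Nat.eqb j K then marginal h m K else 0)
    by (destruct (Nat.eqb j K); [rewrite marginal_extend | rewrite sum_zero]; reflexivity).
  replace (sum_f_R0 (fun n => if Nat.eqb j 0 then h n * ulaw lam mu K m 0 n else 0) (S m))
    with (if Nat.eqb j 0 then marginal h m 0 else 0)
    by (destruct (Nat.eqb j 0); [rewrite marginal_extend | rewrite sum_zero]; reflexivity).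
  destruct (Nat.leb (S j) K); ring.
Qed.

Lemma pi_stat_above j : (K < j)%nat -> pi_stat lam mu K j = 0.
Proof. intro H. unfold pi_stat. rewrite (proj2 (Nat.leb_gt j K)) by lia. reflexivity. Qed.

Lemma pi_stat_balance j : (j < K)%nat ->
  p * pi_stat lam mu K j = q * pi_stat lam mu K (S j).
Proof.
  intro H. unfold pi_stat. cbv zeta.
  rewrite (proj2 (Nat.leb_le j K)), (proj2 (Nat.leb_le (S j) K)) by lia.
  replace p with (q * (lam / mu)) by (unfold arrival_prob, service_prob; field; lra).
  destruct (Req_dec_T (lam / mu) 1) as [->|E]; simpl pow; ring.
Qed.

Lemma pi_stat_mass : sum_f_R0 (pi_stat lam mu K) K = 1.
Proof.
  assert (Hrho : 0 < lam / mu) by (apply Rdiv_lt_0_compat; lra).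
  unfold pi_stat. cbv zeta.
  destruct (Req_dec_T (lam / mu) 1) as [E|E].
  - rewrite (sum_eq _ (fun _ => / INR (K + 1)))
      by (intros i Hi; rewrite (proj2 (Nat.leb_le i K)) by lia; reflexivity).
    rewrite sum_cte. replace (K + 1)%nat with (S K) by lia. field. apply not_0_INR; lia.
  - rewrite (sum_eq _ (fun j => (1 - lam / mu) / (1 - (lam / mu) ^ (K + 1)) * (lam / mu) ^ j))
      by (intros i Hi; rewrite (proj2 (Nat.leb_le i K)) by lia; reflexivity).
    rewrite sum_scal, tech3 by exact E. replace (K + 1)%nat with (S K) by lia.
    assert ((lam / mu) ^ S K <> 1) by (apply pow_ne_1; auto; lia).
    assert (mu - lam <> 0) by (intro; apply E; replace lam with mu by lra; field; lra).
    field. repeat split; lra.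
Qed.

Lemma pi_stat_stationary j : step p q K (pi_stat lam mu K) j = pi_stat lam mu K j.
Proof.
  unfold step. destruct (Nat.leb_spec j K) as [HjK|HjK]; [|rewrite pi_stat_above by lia; reflexivity].
  pose proof prob_sum as pq1.
  destruct j as [|j'].
  - rewrite (proj2 (Nat.leb_le 1 K)) by lia. destruct (Nat.eqb_spec 0 K); [lia|]. simpl.
    pose proof (pi_stat_balance 0 ltac:(lia)). nra.
  - pose proof (pi_stat_balance j' ltac:(lia)).
    destruct (Nat.eqb_spec (S j') K) as [E|E].
    + rewrite (proj2 (Nat.leb_gt (S (S j')) K)) by lia. simpl. subst K. nra.
    + rewrite (proj2 (Nat.leb_le (S (S j')) K)) by lia. simpl.
      pose proof (pi_stat_balance (S j') ltac:(lia)). nra.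
Qed.

Lemma marginal_one m j : marginal (fun _ => 1) m j = pi_stat lam mu K j.
Proof.
  revert j. induction m as [|m IH]; intro j.
  - unfold marginal. simpl. ring.
  - rewrite marginal_S, sum_zero by (intros; ring).
    replace (marginal (fun _ => 1) m) with (pi_stat lam mu K) by (apply functional_extensionality; auto).
    rewrite pi_stat_stationary. destruct (Nat.leb _ _); ring.
Qed.

Definition M1 m j := marginal (fun n => INR n ^ 1) m j.
Definition M2 m j := marginal (fun n => INR n ^ 2) m j.

Lemma M1_S m j :
  M1 (S m) j = step p q K (M1 m) j + departure_flux q K (pi_stat lam mu K) j.
Proof.
  unfold M1. rewrite marginal_S. f_equal. unfold departure_flux.
  destruct (Nat.leb _ _); [|reflexivity]. f_equal.
  rewrite <- (marginal_one m (S j)). apply sum_eq. intros. rewrite S_INR. ring.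
Qed.

Lemma M2_S m j : M2 (S m) j = step p q K (M2 m) j +
  (if Nat.leb (S j) K then q * (2 * M1 m (S j) + pi_stat lam mu K (S j)) else 0).
Proof.
  unfold M2. rewrite marginal_S. f_equal.
  destruct (Nat.leb _ _); [|reflexivity]. f_equal.
  rewrite <- (marginal_one m (S j)). unfold M1, marginal. rewrite <- sum_scal, <- plus_sum.
  apply sum_eq. intros. rewrite S_INR. ring.
Qed.

End Queue.
(** * Poisson mixtures *)

Definition poisson_weight (x : R) (m : nat) : R := exp (- x) * x ^ m / INR (fact m).

Lemma poisson_weight_nonneg x m : 0 <= x -> 0 <= poisson_weight x m.
Proof.
  intro Hx. unfold poisson_weight. apply Rmult_le_pos; [apply Rmult_le_pos|].
  - left; apply exp_pos.
  - apply pow_le; lra.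
  - left; apply Rinv_0_lt_compat, INR_fact_lt_0.
Qed.

Lemma poisson_weight_S x m : poisson_weight x (S m) * INR (S m) = x * poisson_weight x m.
Proof.
  unfold poisson_weight. rewrite fact_simpl, mult_INR. simpl pow.
  field. split; [apply INR_fact_neq_0 | apply not_0_INR; lia].
Qed.

Lemma series_eq (a : nat -> R) l : Un_cv (fun N => sum_f_R0 a N) l -> series a = l.
Proof.
  intro H. unfold series.
  pose proof (epsilon_spec (inhabits 0) (fun l => Un_cv (fun N => sum_f_R0 a N) l) (ex_intro _ l H)).
  eapply UL_sequence; eauto.
Qed.

Lemma series_ext (a b : nat -> R) : (forall m, a m = b m) -> series a = series b.
Proof. intro E. f_equal. apply functional_extensionality, E. Qed.

Lemma cv_const c : Un_cv (fun _ => c) c.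
Proof. intros eps He. exists 0%nat. intros. unfold R_dist. rewrite Rminus_diag, Rabs_R0. exact He. Qed.

Lemma cv_ext (a b : nat -> R) l : (forall n, a n = b n) -> Un_cv a l -> Un_cv b l.
Proof. intros E H eps He. destruct (H eps He) as [N HN]. exists N. intros. rewrite <- E. auto. Qed.

Lemma cv_scal (a : nat -> R) c l : Un_cv a l -> Un_cv (fun n => c * a n) (c * l).
Proof. intro H. apply CV_mult; [apply cv_const | exact H]. Qed.

Lemma cv_shift (a b : nat -> R) l : (forall N, a (S N) = b N) -> Un_cv b l -> Un_cv a l.
Proof.
  intros E H eps Heps. destruct (H eps Heps) as [N0 HN].
  exists (S N0). intros [|n] Hn; [lia|]. rewrite E. apply HN. lia.
Qed.

Lemma cv_abs_le (a : nat -> R) l eps : (forall n, Rabs (a n) <= eps) -> Un_cv a l -> Rabs l <= eps.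
Proof. intros Ha H. exact (Rle_cv_lim Ha (cv_cvabs _ _ H) (cv_const eps)). Qed.

Lemma poisson_total x : Un_cv (fun N => sum_f_R0 (poisson_weight x) N) 1.
Proof.
  replace 1 with (exp (- x) * exp x) by (rewrite exp_Ropp; field; apply Rgt_not_eq, exp_pos).
  apply (cv_shift _ (fun N => exp (- x) * E1 x (S N))).
  - intro N. unfold E1. rewrite <- sum_scal. apply sum_eq. intros. unfold poisson_weight, Rdiv. ring.
  - apply cv_scal, (cv_ext (fun n => E1 x (n + 1))).
    + intro n. rewrite Nat.add_1_r. reflexivity.
    + apply CV_shift', E1_cvg.
Qed.

Lemma poisson_mean x : Un_cv (fun N => sum_f_R0 (fun m => poisson_weight x m * INR m) N) x.
Proof.
  apply (cv_shift _ (fun N => x * sum_f_R0 (poisson_weight x) N)).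
  - intro N. rewrite sum_shift. simpl INR at 1. rewrite Rmult_0_r, Rplus_0_l.
    rewrite <- sum_scal. apply sum_eq. intros. apply poisson_weight_S.
  - pose proof (cv_scal _ x _ (poisson_total x)) as H. rewrite Rmult_1_r in H. exact H.
Qed.

Lemma poisson_factorial_moment x :
  Un_cv (fun N => sum_f_R0 (fun m => poisson_weight x m * (INR m * (INR m - 1))) N) (x ^ 2).
Proof.
  apply (cv_shift _ (fun N => x * sum_f_R0 (fun m => poisson_weight x m * INR m) N)).
  - intro N. rewrite sum_shift. simpl INR at 1. rewrite Rmult_0_l, Rmult_0_r, Rplus_0_l.
    rewrite <- sum_scal. apply sum_eq. intros i _.
    rewrite S_INR. replace (INR i + 1 - 1) with (INR i) by ring.
    rewrite <- S_INR, <- Rmult_assoc, poisson_weight_S. ring.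
  - replace (x ^ 2) with (x * x) by ring. apply cv_scal, poisson_mean.
Qed.

Lemma mixture_converges (w e : nat -> R) B S :
  (forall m, 0 <= w m) -> (forall m, Rabs (e m) <= B) -> Un_cv (fun N => sum_f_R0 w N) S ->
  exists L, Un_cv (fun N => sum_f_R0 (fun m => w m * e m) N) L.
Proof.
  intros Hw He Hs.
  assert (HB : forall m, 0 <= w m * (B + e m) <= w m * (2 * B)).
  { intro m. specialize (Hw m). pose proof (He m) as Hm. unfold Rabs in Hm.
    destruct (Rcase_abs (e m)); split; nra. }
  destruct (Rseries_CV_comp _ _ HB) as [L1 HL1].
  { exists (2 * B * S). apply (cv_ext (fun N => 2 * B * sum_f_R0 w N)).
    - intro n. rewrite <- sum_scal. apply sum_eq. intros; ring.
    - apply cv_scal, Hs. }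
  exists (L1 - B * S).
  apply (cv_ext (fun N => sum_f_R0 (fun m => w m * (B + e m)) N - B * sum_f_R0 w N)).
  - intro n. rewrite <- sum_scal, <- minus_sum. apply sum_eq. intros; ring.
  - apply CV_minus; [exact HL1 | apply cv_scal, Hs].
Qed.

Lemma partial_sum_mono (w : nat -> R) n M :
  (forall m, 0 <= w m) -> (n <= M)%nat -> sum_f_R0 w n <= sum_f_R0 w M.
Proof.
  intros Hw H. induction M as [|M IH].
  - replace n with 0%nat by lia. lra.
  - destruct (Nat.eq_dec n (S M)) as [->|Hne]; [lra|].
    rewrite sum_S. specialize (Hw (S M)). specialize (IH ltac:(lia)). lra.
Qed.

Lemma mixture_partial_sum_bound (w e : nat -> R) B delta M N :
  (forall m, 0 <= w m) -> sum_f_R0 w N <= 1 -> 0 <= delta ->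
  (forall m, Rabs (e m) <= B) -> (forall m, (M < m)%nat -> Rabs (e m) <= delta) ->
  Rabs (sum_f_R0 (fun m => w m * e m) N) <= B * sum_f_R0 w M + delta.
Proof.
  intros Hw Hw1 Hd HB Htail.
  assert (HB0 : 0 <= B) by (specialize (HB 0%nat); pose proof (Rabs_pos (e 0%nat)); lra).
  eapply Rle_trans; [apply sum_f_R0_triangle|].
  apply Rle_trans with (sum_f_R0 (fun m => B * (if Nat.leb m M then w m else 0) + delta * w m) N).
  { apply sum_Rle. intros m _. rewrite Rabs_mult, Rabs_right by (apply Rle_ge, Hw).
    pose proof (Hw m). destruct (Nat.leb_spec m M) as [Hm|Hm].
    - pose proof (HB m). pose proof (Rabs_pos (e m)). nra.
    - pose proof (Htail m Hm). pose proof (Rabs_pos (e m)). nra. }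
  rewrite plus_sum, !sum_scal.
  assert (Hhead : sum_f_R0 (fun m => if Nat.leb m M then w m else 0) N <= sum_f_R0 w M).
  { destruct (Nat.le_gt_cases N M) as [HNM|HNM].
    - rewrite (sum_eq _ w) by (intros i Hi; rewrite (proj2 (Nat.leb_le i M)) by lia; reflexivity).
      apply partial_sum_mono; auto.
    - replace N with (M + (N - M))%nat by lia.
      induction (N - M)%nat as [|k IH].
      + rewrite Nat.add_0_r, (sum_eq _ w)
          by (intros i Hi; rewrite (proj2 (Nat.leb_le i M)) by lia; reflexivity). lra.
      + replace (M + S k)%nat with (S (M + k)) by lia. rewrite sum_S.
        rewrite (proj2 (Nat.leb_gt (S (M + k)) M)) by lia. lra. }
  apply Rplus_le_compat; [apply Rmult_le_compat_l|]; nra.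
Qed.

Lemma exp_ge_term x n : 0 <= x -> x ^ n / INR (fact n) <= exp x.
Proof.
  intro Hx.
  assert (Ht : forall k, 0 <= / INR (fact k) * x ^ k).
  { intro k. apply Rmult_le_pos; [left; apply Rinv_0_lt_compat, INR_fact_lt_0 | apply pow_le; lra]. }
  apply Rle_trans with (sum_f_R0 (fun k => / INR (fact k) * x ^ k) n).
  - destruct n as [|n]; [simpl; lra|].
    rewrite sum_S. pose proof (cond_pos_sum _ n Ht). unfold Rdiv. lra.
  - apply sum_incr; [apply E1_cvg | exact Ht].
Qed.

Lemma poisson_head_bound x M : 1 <= x ->
  sum_f_R0 (poisson_weight x) M <= INR (S M) * INR (fact (S M)) / x.
Proof.
  intro Hx.
  apply Rle_trans with (sum_f_R0 (fun _ => exp (- x) * x ^ M) M).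
  { apply sum_Rle. intros m Hm. unfold poisson_weight, Rdiv.
    assert (x ^ m <= x ^ M) by (apply Rle_pow; auto).
    assert (1 <= INR (fact m)) by (apply (le_INR 1), lt_O_fact).
    assert (H1 : / INR (fact m) <= 1) by (rewrite <- Rinv_1; apply Rinv_le_contravar; lra).
    pose proof (exp_pos (- x)). pose proof (pow_lt x m ltac:(lra)).
    apply Rle_trans with (exp (- x) * x ^ m * 1).
    - apply Rmult_le_compat_l; [nra | exact H1].
    - rewrite Rmult_1_r. apply Rmult_le_compat_l; lra. }
  rewrite sum_cte.
  set (F := INR (fact (S M))).
  assert (HF : 0 < F) by apply INR_fact_lt_0.
  pose proof (exp_pos x) as Hex.
  assert (H1 : x * x ^ M <= F * exp x).
  { pose proof (exp_ge_term x (S M) ltac:(lra)) as He. fold F in He. simpl pow in He.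
    apply Rmult_le_reg_r with (/ F); [apply Rinv_0_lt_compat; lra|].
    replace (F * exp x * / F) with (exp x) by (field; lra). exact He. }
  assert (H2 : exp (- x) * x ^ M <= F / x).
  { rewrite exp_Ropp. apply Rmult_le_reg_r with (x * exp x); [nra|].
    replace (/ exp x * x ^ M * (x * exp x)) with (x * x ^ M) by (field; lra).
    replace (F / x * (x * exp x)) with (F * exp x) by (field; lra). exact H1. }
  replace (INR (S M) * F / x) with (F / x * INR (S M)) by (field; lra).
  apply Rmult_le_compat_r; [apply pos_INR | exact H2].
Qed.

Lemma poisson_mixture_vanishes (e : nat -> R) B :
  (forall m, Rabs (e m) <= B) ->
  (forall eps, 0 < eps -> exists N, forall m, (N <= m)%nat -> Rabs (e m) <= eps) ->
  forall eps, 0 < eps -> exists X, 1 <= X /\ forall x L, X <= x ->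
    Un_cv (fun N => sum_f_R0 (fun m => poisson_weight x m * e m) N) L -> Rabs L <= eps.
Proof.
  intros HB Hc eps Heps.
  assert (HB0 : 0 <= B) by (specialize (HB 0%nat); pose proof (Rabs_pos (e 0%nat)); lra).
  destruct (Hc (eps / 2) ltac:(lra)) as [M HM].
  set (C := INR (S M) * INR (fact (S M))).
  assert (HC : 0 < C) by (apply Rmult_lt_0_compat; [apply lt_0_INR; lia | apply INR_fact_lt_0]).
  exists (Rmax 1 (2 * B * C / eps)). split; [apply Rmax_l|]. intros x L Hx HL.
  assert (Hx1 : 1 <= x) by (eapply Rle_trans; [apply Rmax_l | exact Hx]).
  assert (Hx2 : 2 * B * C / eps <= x) by (eapply Rle_trans; [apply Rmax_r | exact Hx]).
  assert (Hhead : B * sum_f_R0 (poisson_weight x) M <= eps / 2).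
  { apply Rle_trans with (B * (C / x)); [apply Rmult_le_compat_l, poisson_head_bound; auto|].
    apply Rmult_le_reg_r with (2 * x / eps); [apply Rdiv_lt_0_compat; lra|].
    replace (B * (C / x) * (2 * x / eps)) with (2 * B * C / eps) by (field; lra).
    replace (eps / 2 * (2 * x / eps)) with x by (field; lra). exact Hx2. }
  refine (cv_abs_le _ _ _ _ HL). intro N.
  eapply Rle_trans; [apply (mixture_partial_sum_bound _ e B (eps / 2) M N) | lra].
  - intro m. apply poisson_weight_nonneg. lra.
  - apply sum_incr; [apply poisson_total | intro m; apply poisson_weight_nonneg; lra].
  - lra.
  - exact HB.
  - intros m Hm. apply HM. lia.
Qed.

Lemma poisson_mixture_linear x c :
  series (fun m => poisson_weight x m * (c * INR m)) = c * x.
Proof.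
  apply series_eq, (cv_ext (fun N => c * sum_f_R0 (fun m => poisson_weight x m * INR m) N)).
  - intro n. rewrite <- sum_scal. apply sum_eq. intros; ring.
  - apply cv_scal, poisson_mean.
Qed.

Lemma null_scale (e : nat -> R) d :
  (forall eps, 0 < eps -> exists N, forall m, (N <= m)%nat -> Rabs (e m) <= eps) ->
  forall eps, 0 < eps -> exists N, forall m, (N <= m)%nat -> Rabs (d * e m) <= eps.
Proof.
  intros He eps Heps. pose proof (Rabs_pos d).
  destruct (He (eps / (Rabs d + 1))) as [N HN]; [apply Rdiv_lt_0_compat; lra|].
  exists N. intros m Hm. rewrite Rabs_mult.
  apply Rle_trans with (Rabs d * (eps / (Rabs d + 1))); [apply Rmult_le_compat_l; auto|].
  apply Rmult_le_reg_r with (Rabs d + 1); [lra|].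
  replace (Rabs d * (eps / (Rabs d + 1)) * (Rabs d + 1)) with (Rabs d * eps) by (field; lra).
  nra.
Qed.

Lemma poisson_mixture_quadratic (a b c d : R) (e : nat -> R) B :
  (forall m, Rabs (e m) <= B) ->
  (forall eps, 0 < eps -> exists N, forall m, (N <= m)%nat -> Rabs (e m) <= eps) ->
  forall eps, 0 < eps -> exists X, 0 <= X /\ forall x, X <= x ->
    Rabs (series (fun m => poisson_weight x m * (a * (INR m * (INR m - 1)) + b * INR m + c + d * e m))
          - (a * x ^ 2 + b * x + c)) <= eps.
Proof.
  intros HB Hc eps Heps.
  assert (HdB : forall m, Rabs (d * e m) <= Rabs d * B)
    by (intro m; rewrite Rabs_mult; apply Rmult_le_compat_l; [apply Rabs_pos | apply HB]).
  destruct (poisson_mixture_vanishes _ _ HdB (null_scale e d Hc) eps Heps) as (X & HX1 & HX).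
  exists X. split; [lra|]. intros x Hx.
  assert (Hw : forall m, 0 <= poisson_weight x m) by (intro; apply poisson_weight_nonneg; lra).
  destruct (mixture_converges _ _ _ 1 Hw HdB (poisson_total x)) as [L HL].
  replace (series _) with (a * x ^ 2 + b * x + c + L).
  - replace (a * x ^ 2 + b * x + c + L - (a * x ^ 2 + b * x + c)) with L by ring.
    exact (HX x L Hx HL).
  - symmetry. apply series_eq.
    apply (cv_ext (fun N => a * sum_f_R0 (fun m => poisson_weight x m * (INR m * (INR m - 1))) N
                          + b * sum_f_R0 (fun m => poisson_weight x m * INR m) N
                          + c * sum_f_R0 (poisson_weight x) N
                          + sum_f_R0 (fun m => poisson_weight x m * (d * e m)) N)).
    + intro n. rewrite <- !sum_scal, <- !plus_sum. apply sum_eq. intros; ring.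
    + apply CV_plus; [apply CV_plus; [apply CV_plus|] | exact HL].
      * apply cv_scal, poisson_factorial_moment.
      * apply cv_scal, poisson_mean.
      * pose proof (cv_scal _ c _ (poisson_total x)) as H. rewrite Rmult_1_r in H. exact H.
Qed.

(** * Explicit solutions of the Poisson equations *)

Lemma sum_id n : sum_f_R0 (fun j => INR j) n = INR n * (INR n + 1) / 2.
Proof. induction n as [|n IH]; [simpl; field|]. rewrite sum_S, IH, S_INR. field. Qed.

Lemma sum_sq n : sum_f_R0 (fun j => INR j ^ 2) n = INR n * (INR n + 1) * (2 * INR n + 1) / 6.
Proof. induction n as [|n IH]; [simpl; field|]. rewrite sum_S, IH, S_INR. field. Qed.

Lemma sum_cube n : sum_f_R0 (fun j => INR j ^ 3) n = (INR n * (INR n + 1) / 2) ^ 2.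
Proof. induction n as [|n IH]; [simpl; field|]. rewrite sum_S, IH, S_INR. field. Qed.

Lemma sum_pow4 n : sum_f_R0 (fun j => INR j ^ 4) n =
  INR n * (INR n + 1) * (2 * INR n + 1) * (3 * INR n ^ 2 + 3 * INR n - 1) / 30.
Proof. induction n as [|n IH]; [simpl; field|]. rewrite sum_S, IH, S_INR. field. Qed.

(* [sum_(j<=k) j r^j] and [sum_(j<=k) j^2 r^j], written with [X = r^k]. *)
Definition geom_id_sum (r X k : R) := r * (1 - (k + 1) * X + k * r * X) / (1 - r) ^ 2.
Definition geom_sq_sum (r X k : R) :=
  r * (1 + r - (k + 1) ^ 2 * X + (2 * k ^ 2 + 2 * k - 1) * r * X - k ^ 2 * r ^ 2 * X) / (1 - r) ^ 3.

Lemma sum_id_geom (r : R) n : r <> 1 ->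
  sum_f_R0 (fun j => INR j * r ^ j) n = geom_id_sum r (r ^ n) (INR n).
Proof.
  intro Hr. assert (1 - r <> 0) by lra. unfold geom_id_sum.
  induction n as [|n IH]; [simpl; field; auto|].
  rewrite sum_S, IH, S_INR. simpl pow. field. auto.
Qed.

Lemma sum_sq_geom (r : R) n : r <> 1 ->
  sum_f_R0 (fun j => INR j ^ 2 * r ^ j) n = geom_sq_sum r (r ^ n) (INR n).
Proof.
  intro Hr. assert (1 - r <> 0) by lra. unfold geom_sq_sum.
  induction n as [|n IH]; [simpl; field; auto|].
  rewrite sum_S, IH, S_INR. simpl pow. field. auto.
Qed.

Lemma pow_K1 r K : r ^ (K + 1) = r * r ^ K.
Proof. rewrite Nat.add_1_r. reflexivity. Qed.
Lemma pow_2K r K : r ^ (2 * K) = (r ^ K) ^ 2.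
Proof. rewrite <- pow_mult, Nat.mul_comm. reflexivity. Qed.
Lemma pow_2K1 r K : r ^ (2 * K + 1) = r * (r ^ K) ^ 2.
Proof. rewrite Nat.add_1_r, <- pow_2K. reflexivity. Qed.
Lemma pow_2K2 r K : r ^ (2 * (K + 1)) = r ^ 2 * (r ^ K) ^ 2.
Proof. replace (2 * (K + 1))%nat with (2 + K * 2)%nat by lia. rewrite pow_add, pow_mult. reflexivity. Qed.
Lemma pow_2K4 r K : r ^ (2 * (K + 2)) = r ^ 4 * (r ^ K) ^ 2.
Proof. replace (2 * (K + 2))%nat with (4 + K * 2)%nat by lia. rewrite pow_add, pow_mult. reflexivity. Qed.

Definition poisson_solutions (lam mu : R) (K : nat) (psi chi : nat -> R) :=
  let p := arrival_prob lam mu in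
  let q := service_prob lam mu in
  let pi := pi_stat lam mu K in
  (forall j, psi j - step p q K psi j = departure_flux q K pi j - departure_rate q pi * pi j) /\
  sum_f_R0 psi K = 0 /\
  (forall j, chi j - step p q K chi j = psi j) /\
  sum_f_R0 chi K = 0 /\
  vbar lam mu K = (lam + mu) * (departure_rate q pi - 2 * q * psi 0%nat) /\
  bbar_e lam mu K = 2 * q * chi 0%nat.

(** Case [rho <> 1]: [psi j = C + (A + B j) rho^j] and
    [chi j = D + E j + (F + G j + H j^2) rho^j], with coefficients depending on
    [r = rho], [X = rho^K] and [k = K]. *)

Definition mass_norm (r X : R) := 1 - r * X.
Definition pi_first (r X : R) := (1 - r) / mass_norm r X.
Definition pi_last (r X : R) := (1 - r) * X / mass_norm r X.
Definition psi_B (r X : R) := r * (1 - r) * X / mass_norm r X ^ 2.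
Definition psi_C (r X : R) := - r * (psi_B r X + pi_last r X * pi_first r X) / (1 - r).
Definition psi_A (r X k : R) :=
  - (1 - r) / mass_norm r X * ((k + 1) * psi_C r X + psi_B r X * geom_id_sum r X k).
Definition chi_E (r X : R) := - psi_C r X * (1 + r) / (1 - r).
Definition chi_H (r X : R) := psi_B r X * (1 + r) / (2 * (1 - r)).
Definition chi_G (r X k : R) := (psi_A r X k + chi_H r X) * (1 + r) / (1 - r).
Definition chi_D (r X k : R) :=
  - ((1 + r) * (psi_A r X k + psi_C r X) + chi_E r X + r * (chi_G r X k + chi_H r X)) / (1 - r).
Definition chi_F (r X k : R) :=
  - (1 - r) / mass_norm r X * ((k + 1) * chi_D r X k + chi_E r X * k * (k + 1) / 2
     + chi_G r X k * geom_id_sum r X k + chi_H r X * geom_sq_sum r X k).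

Ltac unfold_coeffs := unfold chi_F, chi_D, chi_G, chi_H, chi_E, psi_A, psi_C, psi_B,
  geom_id_sum, geom_sq_sum, pi_last, pi_first, mass_norm.

Definition psi_geom (lam mu : R) (K : nat) (j : nat) : R :=
  let r := lam / mu in let X := r ^ K in
  if Nat.leb j K then psi_C r X + (psi_A r X (INR K) + psi_B r X * INR j) * r ^ j else 0.

Definition chi_geom (lam mu : R) (K : nat) (j : nat) : R :=
  let r := lam / mu in let X := r ^ K in
  if Nat.leb j K then
    chi_D r X (INR K) + chi_E r X * INR j
    + (chi_F r X (INR K) + chi_G r X (INR K) * INR j + chi_H r X * INR j ^ 2) * r ^ j
  else 0.

Section RhoNe1.
Variables (lam mu : R) (K : nat).
Hypothesis Hlam : 0 < lam.
Hypothesis Hmu : 0 < mu.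
Hypothesis HK : (1 <= K)%nat.
Hypothesis Hr : lam / mu <> 1.

Lemma rho_pos : 0 < lam / mu.
Proof. apply Rdiv_lt_0_compat; lra. Qed.

Lemma mass_norm_ne0 : 1 - lam / mu * (lam / mu) ^ K <> 0.
Proof. intro H. apply (pow_ne_1 (lam / mu) (S K) rho_pos Hr ltac:(lia)). simpl. lra. Qed.

Lemma arrival_prob_rho : arrival_prob lam mu = (lam / mu) / (1 + lam / mu).
Proof. unfold arrival_prob. field. split; lra. Qed.

Lemma service_prob_rho : service_prob lam mu = 1 / (1 + lam / mu).
Proof. unfold service_prob. field. split; lra. Qed.

Lemma pi_stat_geom j : (j <= K)%nat ->
  pi_stat lam mu K j = (1 - lam / mu) / (1 - lam / mu * (lam / mu) ^ K) * (lam / mu) ^ j.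
Proof.
  intro Hj. unfold pi_stat. cbv zeta. rewrite (proj2 (Nat.leb_le j K)) by lia.
  destruct (Req_dec_T (lam / mu) 1) as [E|E]; [contradiction|].
  rewrite Nat.add_1_r. reflexivity.
Qed.

Ltac to_rho := rewrite ?arrival_prob_rho, ?service_prob_rho;
  pose proof rho_pos; pose proof mass_norm_ne0;
  assert (1 - lam / mu <> 0) by lra;
  set (r := lam / mu) in *; set (X := r ^ K) in *; set (k := INR K) in *.

Lemma psi_geom_eq : forall j,
  psi_geom lam mu K j - step (arrival_prob lam mu) (service_prob lam mu) K (psi_geom lam mu K) j =
  departure_flux (service_prob lam mu) K (pi_stat lam mu K) j
  - departure_rate (service_prob lam mu) (pi_stat lam mu K) * pi_stat lam mu K j.
Proof.
  apply balance_from_rows; auto using prob_sum.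
  - intros j Hj. unfold psi_geom. rewrite (proj2 (Nat.leb_gt j K)) by lia. reflexivity.
  - intros j Hj. unfold departure_flux. rewrite (proj2 (Nat.leb_gt (S j) K)) by lia.
    rewrite pi_stat_above by auto. ring.
  - rewrite step_at0 by auto. unfold departure_flux, departure_rate, psi_geom.
    rewrite (proj2 (Nat.leb_le 0 K)), (proj2 (Nat.leb_le 1 K)) by lia.
    rewrite !pi_stat_geom by lia. to_rho. simpl pow. simpl INR. unfold_coeffs. field. lra.
  - intros j Hj. rewrite step_interior by auto. unfold departure_flux, departure_rate, psi_geom.
    rewrite (proj2 (Nat.leb_le j K)), (proj2 (Nat.leb_le (S j) K)), (proj2 (Nat.leb_le (S (S j)) K)) by lia.
    rewrite !pi_stat_geom by lia. rewrite !S_INR. to_rho. simpl pow. unfold_coeffs. field. lra.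
  - apply departure_source_mass; auto using pi_stat_mass.
Qed.

Lemma psi_geom_mass : sum_f_R0 (psi_geom lam mu K) K = 0.
Proof.
  unfold psi_geom.
  rewrite (sum_eq _ (fun j => psi_C (lam / mu) ((lam / mu) ^ K)
      + psi_A (lam / mu) ((lam / mu) ^ K) (INR K) * (lam / mu) ^ j
      + psi_B (lam / mu) ((lam / mu) ^ K) * (INR j * (lam / mu) ^ j)))
    by (intros j Hj; rewrite (proj2 (Nat.leb_le j K)) by lia; ring).
  rewrite !plus_sum, !sum_scal, sum_cte, tech3, sum_id_geom by exact Hr.
  rewrite S_INR. simpl pow. to_rho. unfold_coeffs. field. lra.
Qed.

Lemma chi_geom_eq : forall j,
  chi_geom lam mu K j - step (arrival_prob lam mu) (service_prob lam mu) K (chi_geom lam mu K) j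
  = psi_geom lam mu K j.
Proof.
  apply balance_from_rows; auto using prob_sum.
  - intros j Hj. unfold chi_geom. rewrite (proj2 (Nat.leb_gt j K)) by lia. reflexivity.
  - intros j Hj. unfold psi_geom. rewrite (proj2 (Nat.leb_gt j K)) by lia. reflexivity.
  - rewrite step_at0 by auto. unfold chi_geom, psi_geom.
    rewrite (proj2 (Nat.leb_le 0 K)), (proj2 (Nat.leb_le 1 K)) by lia.
    to_rho. simpl pow. simpl INR. unfold_coeffs. field. lra.
  - intros j Hj. rewrite step_interior by auto. unfold chi_geom, psi_geom.
    rewrite (proj2 (Nat.leb_le j K)), (proj2 (Nat.leb_le (S j) K)), (proj2 (Nat.leb_le (S (S j)) K)) by lia.
    rewrite !S_INR. to_rho. simpl pow. unfold_coeffs. field. lra.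
  - apply psi_geom_mass.
Qed.

Lemma chi_geom_mass : sum_f_R0 (chi_geom lam mu K) K = 0.
Proof.
  unfold chi_geom.
  rewrite (sum_eq _ (fun j => chi_D (lam / mu) ((lam / mu) ^ K) (INR K)
      + chi_E (lam / mu) ((lam / mu) ^ K) * INR j
      + chi_F (lam / mu) ((lam / mu) ^ K) (INR K) * (lam / mu) ^ j
      + chi_G (lam / mu) ((lam / mu) ^ K) (INR K) * (INR j * (lam / mu) ^ j)
      + chi_H (lam / mu) ((lam / mu) ^ K) * (INR j ^ 2 * (lam / mu) ^ j)))
    by (intros j Hj; rewrite (proj2 (Nat.leb_le j K)) by lia; ring).
  rewrite !plus_sum, !sum_scal, sum_cte, sum_id, tech3, sum_id_geom, sum_sq_geom by exact Hr.
  rewrite S_INR. simpl pow. to_rho. unfold_coeffs. field. lra.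
Qed.

Lemma poisson_solutions_geom : poisson_solutions lam mu K (psi_geom lam mu K) (chi_geom lam mu K).
Proof.
  repeat split; [exact psi_geom_eq | exact psi_geom_mass | exact chi_geom_eq | exact chi_geom_mass | |].
  - unfold vbar. cbv zeta. destruct (Req_dec_T (lam / mu) 1) as [E|E]; [contradiction|].
    unfold departure_rate, psi_geom. rewrite (proj2 (Nat.leb_le 0 K)) by lia.
    rewrite pi_stat_geom by lia. rewrite pow_K1, pow_2K1. simpl pow. simpl INR.
    to_rho. replace lam with (mu * r) by (unfold r; field; lra).
    unfold_coeffs. field. lra.
  - unfold bbar_e. cbv zeta. destruct (Req_dec_T (lam / mu) 1) as [E|E]; [contradiction|].
    unfold N_K, chi_geom. rewrite (proj2 (Nat.leb_le 0 K)) by lia.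
    rewrite pow_K1, pow_2K, pow_2K2, pow_2K4. simpl INR. rewrite pow_O.
    to_rho. unfold_coeffs. field. lra.
Qed.

End RhoNe1.

Definition inv_states (k : R) := 1 / (k + 1).
Definition psi1_B (k : R) := - inv_states k ^ 2 / 2.
Definition psi1_A (k : R) := - inv_states k ^ 2 / 2.
Definition psi1_C (k : R) :=
  - (psi1_A k * (k * (k + 1) / 2) + psi1_B k * (k * (k + 1) * (2 * k + 1) / 6)) / (k + 1).
Definition chi1_H (k : R) := - psi1_B k / 6.
Definition chi1_G (k : R) := - psi1_A k / 3.
Definition chi1_F (k : R) := - psi1_C k - chi1_H k.
Definition chi1_E (k : R) := - 2 * psi1_C k - chi1_F k - chi1_G k - chi1_H k.
Definition chi1_D (k : R) :=
  - (chi1_E k * (k * (k + 1) / 2) + chi1_F k * (k * (k + 1) * (2 * k + 1) / 6)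
     + chi1_G k * ((k * (k + 1) / 2) ^ 2)
     + chi1_H k * (k * (k + 1) * (2 * k + 1) * (3 * k ^ 2 + 3 * k - 1) / 30)) / (k + 1).

Ltac unfold_coeffs1 := unfold chi1_D, chi1_E, chi1_F, chi1_G, chi1_H,
  psi1_C, psi1_A, psi1_B, inv_states.

Definition psi_poly (K : nat) (j : nat) : R :=
  let k := INR K in
  if Nat.leb j K then psi1_C k + psi1_A k * INR j + psi1_B k * INR j ^ 2 else 0.

Definition chi_poly (K : nat) (j : nat) : R :=
  let k := INR K in
  if Nat.leb j K then
    chi1_D k + chi1_E k * INR j + chi1_F k * INR j ^ 2 + chi1_G k * INR j ^ 3 + chi1_H k * INR j ^ 4
  else 0.

Section RhoEq1.
Variables (lam mu : R) (K : nat).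
Hypothesis Hlam : 0 < lam.
Hypothesis Hmu : 0 < mu.
Hypothesis HK : (1 <= K)%nat.
Hypothesis Hr : lam / mu = 1.

Lemma lam_eq_mu : lam = mu.
Proof. apply (Rmult_eq_reg_r (/ mu)); [|apply Rinv_neq_0_compat; lra]. rewrite Rinv_r by lra. exact Hr. Qed.

Lemma arrival_prob_half : arrival_prob lam mu = 1 / 2.
Proof. unfold arrival_prob. rewrite lam_eq_mu. field. lra. Qed.

Lemma service_prob_half : service_prob lam mu = 1 / 2.
Proof. unfold service_prob. rewrite lam_eq_mu. field. lra. Qed.

Lemma pi_stat_uniform j : (j <= K)%nat -> pi_stat lam mu K j = 1 / (INR K + 1).
Proof.
  intro Hj. unfold pi_stat. cbv zeta. rewrite (proj2 (Nat.leb_le j K)) by lia.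
  destruct (Req_dec_T (lam / mu) 1) as [E|E]; [|contradiction].
  rewrite plus_INR. simpl INR. field. pose proof (pos_INR K). lra.
Qed.

Ltac to_k := rewrite ?arrival_prob_half, ?service_prob_half;
  assert (0 <= INR K) by apply pos_INR; set (k := INR K) in *.

Lemma psi_poly_eq : forall j,
  psi_poly K j - step (arrival_prob lam mu) (service_prob lam mu) K (psi_poly K) j =
  departure_flux (service_prob lam mu) K (pi_stat lam mu K) j
  - departure_rate (service_prob lam mu) (pi_stat lam mu K) * pi_stat lam mu K j.
Proof.
  apply balance_from_rows; auto using prob_sum.
  - intros j Hj. unfold psi_poly. rewrite (proj2 (Nat.leb_gt j K)) by lia. reflexivity.
  - intros j Hj. unfold departure_flux. rewrite (proj2 (Nat.leb_gt (S j) K)) by lia.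
    rewrite pi_stat_above by auto. ring.
  - rewrite step_at0 by auto. unfold departure_flux, departure_rate, psi_poly.
    rewrite (proj2 (Nat.leb_le 0 K)), (proj2 (Nat.leb_le 1 K)) by lia.
    rewrite !pi_stat_uniform by lia. simpl INR. to_k. unfold_coeffs1. field. lra.
  - intros j Hj. rewrite step_interior by auto. unfold departure_flux, departure_rate, psi_poly.
    rewrite (proj2 (Nat.leb_le j K)), (proj2 (Nat.leb_le (S j) K)), (proj2 (Nat.leb_le (S (S j)) K)) by lia.
    rewrite !pi_stat_uniform by lia. rewrite !S_INR. to_k. unfold_coeffs1. field. lra.
  - apply departure_source_mass; auto using pi_stat_mass.
Qed.

Lemma psi_poly_mass : sum_f_R0 (psi_poly K) K = 0.
Proof.
  unfold psi_poly.
  rewrite (sum_eq _ (fun j => psi1_C (INR K) + psi1_A (INR K) * INR j + psi1_B (INR K) * INR j ^ 2))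
    by (intros j Hj; rewrite (proj2 (Nat.leb_le j K)) by lia; ring).
  rewrite !plus_sum, !sum_scal, sum_cte, sum_id, sum_sq.
  rewrite S_INR. to_k. unfold_coeffs1. field. lra.
Qed.

Lemma chi_poly_eq : forall j,
  chi_poly K j - step (arrival_prob lam mu) (service_prob lam mu) K (chi_poly K) j = psi_poly K j.
Proof.
  apply balance_from_rows; auto using prob_sum.
  - intros j Hj. unfold chi_poly. rewrite (proj2 (Nat.leb_gt j K)) by lia. reflexivity.
  - intros j Hj. unfold psi_poly. rewrite (proj2 (Nat.leb_gt j K)) by lia. reflexivity.
  - rewrite step_at0 by auto. unfold chi_poly, psi_poly.
    rewrite (proj2 (Nat.leb_le 0 K)), (proj2 (Nat.leb_le 1 K)) by lia.
    simpl INR. to_k. unfold_coeffs1. field. lra.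
  - intros j Hj. rewrite step_interior by auto. unfold chi_poly, psi_poly.
    rewrite (proj2 (Nat.leb_le j K)), (proj2 (Nat.leb_le (S j) K)), (proj2 (Nat.leb_le (S (S j)) K)) by lia.
    rewrite !S_INR. to_k. unfold_coeffs1. field. lra.
  - apply psi_poly_mass.
Qed.

Lemma chi_poly_mass : sum_f_R0 (chi_poly K) K = 0.
Proof.
  unfold chi_poly.
  rewrite (sum_eq _ (fun j => chi1_D (INR K) + chi1_E (INR K) * INR j + chi1_F (INR K) * INR j ^ 2
     + chi1_G (INR K) * INR j ^ 3 + chi1_H (INR K) * INR j ^ 4))
    by (intros j Hj; rewrite (proj2 (Nat.leb_le j K)) by lia; ring).
  rewrite !plus_sum, !sum_scal, sum_cte, sum_id, sum_sq, sum_cube, sum_pow4.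
  rewrite S_INR. to_k. unfold_coeffs1. field. lra.
Qed.

Lemma poisson_solutions_poly : poisson_solutions lam mu K (psi_poly K) (chi_poly K).
Proof.
  repeat split; [exact psi_poly_eq | exact psi_poly_mass | exact chi_poly_eq | exact chi_poly_mass | |].
  - unfold vbar. cbv zeta. destruct (Req_dec_T (lam / mu) 1) as [E|E]; [|contradiction].
    unfold departure_rate, psi_poly. rewrite (proj2 (Nat.leb_le 0 K)) by lia.
    rewrite pi_stat_uniform by lia. simpl INR. to_k. rewrite <- lam_eq_mu.
    unfold_coeffs1. field. lra.
  - unfold bbar_e. cbv zeta. destruct (Req_dec_T (lam / mu) 1) as [E|E]; [|contradiction].
    unfold chi_poly. rewrite (proj2 (Nat.leb_le 0 K)) by lia.
    simpl INR. to_k. unfold_coeffs1. field. lra.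
Qed.

End RhoEq1.

Lemma poisson_solutions_exist lam mu K : 0 < lam -> 0 < mu -> (1 <= K)%nat ->
  exists psi chi, poisson_solutions lam mu K psi chi.
Proof.
  intros Hl Hm HK. destruct (Req_dec_T (lam / mu) 1) as [E|E].
  - exists (psi_poly K), (chi_poly K). apply poisson_solutions_poly; auto.
  - exists (psi_geom lam mu K), (chi_geom lam mu K). apply poisson_solutions_geom; auto.
Qed.

(* Exact departure moments after [m] clock events, where the remainder
   [steps m chi 0] is bounded and tends to zero. *)
Lemma departure_moments lam mu K psi chi : 0 < lam -> 0 < mu -> (1 <= K)%nat ->
  poisson_solutions lam mu K psi chi ->
  let p := arrival_prob lam mu in let q := service_prob lam mu in
  let c := departure_rate q (pi_stat lam mu K) in
  forall m, umoment lam mu K m 1 = c * INR m /\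
    umoment lam mu K m 2 = c ^ 2 * (INR m * (INR m - 1)) + (c - 2 * q * psi 0%nat) * INR m
                           + 2 * q * chi 0%nat - 2 * q * steps p q K m chi 0%nat.
Proof.
  intros Hl Hm HK (Hpsi & Hpsim & Hchi & _) p q c m.
  pose proof (prob_sum lam mu Hl Hm) as pq1.
  pose proof (pi_stat_mass lam mu K Hl Hm HK) as Hmass.
  pose proof (pi_stat_stationary lam mu K Hl Hm HK) as Hstat.
  change (umoment lam mu K m 1) with (sum_f_R0 (M1 lam mu K m) K).
  change (umoment lam mu K m 2) with (sum_f_R0 (M2 lam mu K m) K).
  split.
  - rewrite (first_moment p q K pq1 HK _ Hmass Hstat psi Hpsi Hpsim (M1 lam mu K)).
    + unfold c. ring.
    + intro j. unfold M1, marginal. simpl. ring.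
    + intros; apply M1_S; auto.
  - rewrite (second_moment p q K pq1 HK _ Hmass Hstat psi chi Hpsi Hpsim Hchi
               (M1 lam mu K) (M2 lam mu K)).
    + unfold c. ring.
    + intro j. unfold M1, marginal. simpl. ring.
    + intros; apply M1_S; auto.
    + intro j. unfold M2, marginal. simpl. ring.
    + intros; apply M2_S; auto.
Qed.

Lemma variance_as_poisson_mixture lam mu K psi chi t : 0 < lam -> 0 < mu -> (1 <= K)%nat ->
  poisson_solutions lam mu K psi chi ->
  let p := arrival_prob lam mu in let q := service_prob lam mu in
  let c := departure_rate q (pi_stat lam mu K) in let x := (lam + mu) * t in
  VarD lam mu K t =
    series (fun m => poisson_weight x m * (c ^ 2 * (INR m * (INR m - 1)) + (c - 2 * q * psi 0%nat) * INR m
                     + 2 * q * chi 0%nat + - 2 * q * steps p q K m chi 0%nat))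
    - (c * x) ^ 2.
Proof.
  intros Hl Hm HK Hsol p q c x.
  pose proof (departure_moments lam mu K psi chi Hl Hm HK Hsol) as Hmom. cbv zeta in Hmom.
  unfold VarD, ED_moment.
  rewrite (series_ext (fun m => poisson_w lam mu t m * umoment lam mu K m 1)
             (fun m => poisson_weight x m * (c * INR m))), poisson_mixture_linear
    by (intro m; rewrite (proj1 (Hmom m)); reflexivity).
  f_equal. apply series_ext. intro m.
  rewrite (proj2 (Hmom m)). change (poisson_w lam mu t m) with (poisson_weight x m).
  unfold c, q, p. ring.
Qed.

Theorem proposition1 (lam mu : R) (K : nat) :
  0 < lam -> 0 < mu -> (1 <= K)%nat ->
  forall eps : R, 0 < eps ->
    exists T : R, forall t : R, T <= t ->
      Rabs (VarD lam mu K t - (vbar lam mu K * t + bbar_e lam mu K)) < eps.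
Proof.
  intros Hl Hm HK eps Heps.
  destruct (poisson_solutions_exist lam mu K Hl Hm HK) as (psi & chi & Hsol).
  pose proof (fun t => variance_as_poisson_mixture lam mu K psi chi t Hl Hm HK Hsol) as Hvar.
  cbv zeta in Hvar. destruct Hsol as (_ & _ & _ & Hchim & Hv & Hb).
  set (p := arrival_prob lam mu) in *. set (q := service_prob lam mu) in *.
  set (c := departure_rate q (pi_stat lam mu K)) in *.
  assert (Hq : 0 < q) by (apply Rdiv_lt_0_compat; lra).
  assert (Hp : 0 <= p) by (left; apply Rdiv_lt_0_compat; lra).
  (* the remainder [steps m chi 0] is bounded and null since [chi] has mass zero *)
  destruct (poisson_mixture_quadratic (c ^ 2) (c - 2 * q * psi 0%nat) (2 * q * chi 0%nat) (- 2 * q)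
              (fun m => steps p q K m chi 0%nat) _
              (fun m => steps_bounded p q K Hp Hq (prob_sum lam mu Hl Hm) HK chi m 0 ltac:(lia))
              (zero_mass_decays p q K Hp Hq (prob_sum lam mu Hl Hm) HK chi 0 ltac:(lia) Hchim)
              (eps / 2) ltac:(lra)) as (X & HX0 & HX).
  exists (X / (lam + mu)). intros t Ht.
  assert (Hx : X <= (lam + mu) * t).
  { apply Rmult_le_reg_r with (/ (lam + mu)); [apply Rinv_0_lt_compat; lra|].
    replace ((lam + mu) * t * / (lam + mu)) with t by (field; lra). exact Ht. }
  specialize (HX _ Hx). rewrite Hvar, Hv, Hb. set (S := series _) in *.
  (* the x^2 terms cancel between E[D^2] and E[D]^2 *)
  replace (S - (c * ((lam + mu) * t)) ^ 2 - ((lam + mu) * (c - 2 * q * psi 0%nat) * t + 2 * q * chi 0%nat))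
    with (S - (c ^ 2 * ((lam + mu) * t) ^ 2 + (c - 2 * q * psi 0%nat) * ((lam + mu) * t)
              + 2 * q * chi 0%nat)) by ring.
  lra.
Qed.
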